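(* Fix $i\in[n]$, arbitrary bid profiles $\mathbf{b}_{-i}^{(1)},\dots,\mathbf{b}_{-i}^{(T)}\in B^{n-1}$, and auction formats $\mathcal{M}^{(1)},\dots,\mathcal{M}^{(T)}$ all satisfying allocation monotonicity. Then \[ \max_{s\in\mathcal{S}}\sum_{t\in[T]}u_i^{(t)}(s)=\max_{s\in\mathcal{S}^\dagger}\sum_{t\in[T]}u_i^{(t)}(s). \] Consequently, for any strategies $s_i^{(1)},\dots,s_i^{(T)}\in\mathcal{S}$, $\mathrm{Reg}_i^\dagger=\mathrm{Reg}_i$, where $\mathrm{Reg}_i:=\max_{s\in\mathcal{S}}\sum_t(u_i^{(t)}(s)-u_i^{(t)}(s_i^{(t)}))$ and $\mathrm{Reg}_i^\dagger:=\max_{s\in\mathcal{S}^\dagger}\sum_t(u_i^{(t)}(s)-u_i^{(t)}(s_i^{(t)}))$.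
   Context: Bidder $i$'s value $v_i\in[0,1]$ is drawn from a continuous distribution $\mathcal{D}_i$ on $[0,1]$. The bid set is $B:=\{j/K: j=0,\dots,K\}$. $\mathcal{S}$ is the set of all (measurable) functions $s:[0,1]\to B$ and $\mathcal{S}^\dagger\subseteq\mathcal{S}$ the monotone ones ($v\le v'\Rightarrow s(v)\le s(v')$). An auction format is $\mathcal{M}^{(t)}=(\mathbf{x}^{(t)},\mathbf{p}^{(t)})$ with $\mathbf{x}^{(t)}:B^n\to\Delta([n])$ (nonnegative entries summing to at most 1) and $\mathbf{p}^{(t)}:B^n\to[0,1]^n$. Allocation monotonicity: for all $i$, $\mathbf{b}_{-i}\in B^{n-1}$ and $b_i\le b_i'$ in $B$, $x_i^{(t)}(b_i,\mathbf{b}_{-i})\le x_i^{(t)}(b_i',\mathbf{b}_{-i})$. Utility: $u_i^{(t)}(s):=\mathbb{E}_{v_i\sim\mathcal{D}_i}[x_i^{(t)}(s(v_i),\mathbf{b}_{-i}^{(t)})v_i-p_i^{(t)}(s(v_i),\mathbf{b}_{-i}^{(t)})]$. *)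

From HB Require Import structures.
From mathcomp Require Import all_boot all_order all_algebra.
From mathcomp Require Import all_classical all_reals all_analysis.
Set Implicit Arguments. Unset Strict Implicit. Unset Printing Implicit Defensive.
Import Order.TTheory GRing.Theory Num.Theory.
Local Open Scope classical_set_scope.
Local Open Scope ring_scope.

(* The bid set B = {j/K : j = 0..K} is represented by indices j : 'I_K.+1;
   the actual bid value is bidval K j = j/K.  Since K > 0 the order on
   indices coincides with the order on bid values. *)
Definition bidval (R : realType) (K : nat) (j : 'I_K.+1) : R := j%:R / K%:R.

Definition profile (n K : nat) := 'I_n -> 'I_K.+1.

Definition upd (n K : nat) (b : profile n K) (i : 'I_n) (bi : 'I_K.+1) :
  profile n K := fun j => if j == i then bi else b j.

(* An auction format M = (x, p), x : B^n -> Delta([n]), p : B^n -> [0,1]^n. *)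
Record auction (R : realType) (n K : nat) := Auction {
  alloc : profile n K -> 'I_n -> R;
  pay   : profile n K -> 'I_n -> R }.

Definition valid_auction (R : realType) (n K : nat) (M : auction R n K) : Prop :=
  (forall b j, 0 <= alloc M b j) /\
  (forall b, \sum_(j < n) alloc M b j <= 1) /\
  (forall b j, 0 <= pay M b j <= 1).

Definition alloc_monotone (R : realType) (n K : nat) (M : auction R n K) : Prop :=
  forall (i : 'I_n) (b : profile n K) (bi bi' : 'I_K.+1),
    (bi <= bi')%N -> alloc M (upd b i bi) i <= alloc M (upd b i bi') i.

(* Strategies s : [0,1] -> B (values of s outside [0,1] are irrelevant).
   S : measurable functions (preimage of each bid is a Borel subset of [0,1]). *)
Definition strategy (R : realType) (K : nat) := R -> 'I_K.+1.

Definition is_strategy (R : realType) (K : nat) (s : strategy R K) : Prop :=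
  forall j : 'I_K.+1, measurable (`[0%R, 1%R]%classic `&` s @^-1` [set j]).

Definition is_monotone_strategy (R : realType) (K : nat) (s : strategy R K) : Prop :=
  is_strategy s /\
  forall v v' : R, v \in `[0, 1] -> v' \in `[0, 1] -> v <= v' -> (s v <= s v')%N.

Definition continuous_dist01 (R : realType) (P : probability R R) : Prop :=
  P `[0%R, 1%R]%classic = 1%E /\ forall x : R, P [set x] = 0%E.

Definition utility (R : realType) (n K : nat) (P : probability R R)
  (M : auction R n K) (i : 'I_n) (b : profile n K) (s : strategy R K) : R :=
  Rintegral P `[0%R, 1%R]%classic
    (fun v => alloc M (upd b i (s v)) i * v - pay M (upd b i (s v)) i).

Definition is_max (T : Type) (R : realType) (A : T -> Prop) (f : T -> R) (m : R) : Prop :=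
  (exists2 s, A s & f s = m) /\ (forall s, A s -> f s <= m).

From HB Require Import structures.
From mathcomp Require Import all_boot all_order all_algebra.
From mathcomp Require Import all_classical all_reals all_analysis.
From mathcomp Require Import measurable_realfun lra.
(* Bidding j at value v earns, summed over the T rounds, gain j v = A j * v - C j,
   where A j and C j are the total allocation and payment of bid j.  The total
   utility of a strategy s is the integral of gain (s v) v over [0, 1], so the
   strategy choosing at each v the largest maximiser of gain _ v is optimal among
   all strategies.  Allocation monotonicity makes A nondecreasing, hence
   gain j - gain j' is nondecreasing in v for j' <= j, and the largest maximiser
   is nondecreasing in v: the optimum is attained by a monotone strategy, which is
   measurable because its fibres are intervals.  Regrets differ from total
   utilities by a constant. *)

Set Implicit Arguments. Unset Strict Implicit. Unset Printing Implicit Defensive.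
Import Order.TTheory GRing.Theory Num.Theory.
Local Open Scope classical_set_scope.
Local Open Scope ring_scope.

Local Notation itv01 R := (`[0%R, 1%R]%classic : set R).

Definition gain (R : pzRingType) (I : Type) (A C : I -> R) (j : I) (v : R) : R :=
  A j * v - C j.

Lemma monotone_is_strategy (R : realType) (K : nat) (s : strategy R K) :
  (forall v v' : R, v \in `[0, 1] -> v' \in `[0, 1] -> v <= v' -> (s v <= s v')%N) ->
  is_strategy s.
Proof.
move=> s_mono j; apply: is_interval_measurable => x y [x01 sx] [y01 sy] z /andP[xz zy].
have z01 : itv01 R z.
  move: x01 y01; rewrite /= !in_itv /= => /andP[x0 _] /andP[_ y1].
  by rewrite (le_trans x0 xz) (le_trans zy y1).
split => //; apply/val_inj/eqP; rewrite eqn_leq.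
by rewrite -{1}sy -sx !s_mono ?inE.
Qed.

Lemma measurable_fun_strategy (R : realType) (K : nat) (s : strategy R K)
    (f : 'I_K.+1 -> R -> R) :
  is_strategy s -> (forall j, measurable_fun setT (f j)) ->
  measurable_fun (itv01 R) (fun v => f (s v) v).
Proof.
move=> s_meas f_meas _ Y mY.
have -> : itv01 R `&` (fun v => f (s v) v) @^-1` Y =
    \bigcup_(j in setT) ((itv01 R `&` s @^-1` [set j]) `&`
                         (setT `&` f j @^-1` Y)).
  apply/seteqP; split => [v [v01 Yv]|v [j _ [[v01 <-] [_ Yv]]]] //.
  by exists (s v).
apply: fin_bigcup_measurable => // j _.
by apply: measurableI; [exact: s_meas | exact: f_meas].
Qed.

Lemma integrable_gain_strategy (R : realType) (K : nat)
    (mu : {finite_measure set R -> \bar R}) (A C : 'I_K.+1 -> R) (s : strategy R K) :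
  is_strategy s -> mu.-integrable (itv01 R) (EFin \o (fun v => gain A C (s v) v)).
Proof.
move=> s_meas; apply: measurable_bounded_integrable.
- exact: measurable_itv.
- by rewrite -ge0_fin_numE //; exact: fin_num_measure (measurable_itv _).
- apply: measurable_fun_strategy => // j.
  by apply: measurable_funB => //; apply: measurable_funM.
exists (\sum_j (`|A j| + `|C j|)); split; first exact: num_real.
move=> M /ltW boundM v /=; rewrite in_itv /= => /andP[v0 v1].
apply: le_trans boundM; apply: le_trans (ler_normB _ _) _.
rewrite (bigD1 (s v)) //= -[X in X <= _]addr0 lerD ?sumr_ge0 // lerD2r normrM.
by rewrite ler_piMr //; move: v0 v1 => /ger0_norm ->.
Qed.

Lemma Rintegral_sum (d : measure_display) (T : measurableType d) (R : realType)
    (mu : {measure set T -> \bar R}) (D : set T) (I : Type) (r : seq I)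
    (f : I -> T -> R) :
  measurable D -> (forall k, mu.-integrable D (EFin \o f k)) ->
  \int[mu]_(x in D) (\sum_(k <- r) f k x) = \sum_(k <- r) \int[mu]_(x in D) f k x.
Proof.
move=> mD f_int; elim: r => [|k r IHr].
  by under eq_fun do rewrite big_nil; rewrite big_nil Rintegral_cst // mul0r.
under eq_fun do rewrite big_cons; rewrite big_cons -IHr RintegralD //.
have -> : EFin \o (fun x => \sum_(j <- r) f j x) = fun x => \sum_(j <- r) (f j x)%:E.
  by apply/funext => x; rewrite /= sumEFin.
by apply: integrable_sum => // j _; exact: f_int.
Qed.

Section best_bid.
Variables (R : realType) (K : nat) (A C : 'I_K.+1 -> R).
Local Notation gain := (gain A C).

Definition is_best_bid (v : R) (j : 'I_K.+1) : bool :=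
  [forall k, gain k v <= gain j v].

Definition some_best_bid (v : R) : 'I_K.+1 := [arg max_(j > ord0) gain j v]%O.

Definition top_best_bid (v : R) : 'I_K.+1 :=
  [arg max_(j > some_best_bid v | is_best_bid v j) (j : nat)].

Lemma some_best_bidP v : is_best_bid v (some_best_bid v).
Proof.
rewrite /some_best_bid; case: arg_maxP => // j _ jmax.
by apply/forallP => k; exact: jmax.
Qed.

Lemma top_best_bidP v : is_best_bid v (top_best_bid v).
Proof. by rewrite /top_best_bid; case: arg_maxnP => //; exact: some_best_bidP. Qed.

Lemma gain_le_top_best_bid v k : gain k v <= gain (top_best_bid v) v.
Proof. by move/forallP: (top_best_bidP v); apply. Qed.

Lemma gain_lt_top_best_bid v (k : 'I_K.+1) :
  (top_best_bid v < k)%N -> gain k v < gain (top_best_bid v) v.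
Proof.
move=> topk; rewrite ltNge; apply/negP => le_top_k.
have k_best : is_best_bid v k.
  by apply/forallP => k'; exact: le_trans (gain_le_top_best_bid v k') le_top_k.
move: topk; rewrite /top_best_bid.
case: arg_maxnP => [|j _ jmax]; first exact: some_best_bidP.
by rewrite ltnNge => /negP; apply; exact: jmax.
Qed.

Hypothesis A_nondecreasing : forall j j' : 'I_K.+1, (j <= j')%N -> A j <= A j'.

Lemma top_best_bid_nondecreasing v v' :
  v <= v' -> (top_best_bid v <= top_best_bid v')%N.
Proof.
move=> le_vv'; rewrite leqNgt; apply/negP => lt_top.
have strict := gain_lt_top_best_bid lt_top.
have weak := gain_le_top_best_bid v (top_best_bid v').
have le_A := A_nondecreasing (ltnW lt_top).
have : (A (top_best_bid v) - A (top_best_bid v')) * v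
       <= (A (top_best_bid v) - A (top_best_bid v')) * v'.
  by apply: ler_wpM2l => //; rewrite subr_ge0.
move: strict weak; rewrite /gain; lra.
Qed.

Lemma top_best_bid_monotone_strategy : is_monotone_strategy top_best_bid.
Proof.
have top_mono (v v' : R) : v \in `[0, 1] -> v' \in `[0, 1] -> v <= v' ->
    (top_best_bid v <= top_best_bid v')%N.
  by move=> _ _; exact: top_best_bid_nondecreasing.
by split; first exact: monotone_is_strategy.
Qed.

Lemma Rintegral_gain_le_top_best_bid (mu : {finite_measure set R -> \bar R})
    (s : strategy R K) : is_strategy s ->
  \int[mu]_(v in itv01 R) gain (s v) v
  <= \int[mu]_(v in itv01 R) gain (top_best_bid v) v.
Proof.
move=> s_meas; apply: (@le_Rintegral _ _ _ mu); first exact: measurable_itv.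
- exact: integrable_gain_strategy.
- by apply: integrable_gain_strategy; case: top_best_bid_monotone_strategy.
- by move=> v _; exact: gain_le_top_best_bid.
Qed.

End best_bid.

Lemma is_max_attained (S : Type) (R : realType) (A : S -> Prop) (f : S -> R) x :
  A x -> (forall s, A s -> f s <= f x) -> is_max A f (f x).
Proof. by move=> Ax fx; split; first exists x. Qed.

Lemma is_max_subr (S : Type) (R : realType) (A : S -> Prop) (f : S -> R) m c :
  is_max A f m -> is_max A (fun s => f s - c) (m - c).
Proof.
case=> [[x Ax <-] fm]; split; first by exists x.
by move=> s As; rewrite lerD2r; exact: fm.
Qed.

Section repeated_auction.
Variables (R : realType) (n K T : nat) (P : probability R R).
Variables (i : 'I_n) (M : 'I_T -> auction R n K) (b : 'I_T -> profile n K).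

Definition total_alloc (j : 'I_K.+1) : R := \sum_(t < T) alloc (M t) (upd (b t) i j) i.
Definition total_pay (j : 'I_K.+1) : R := \sum_(t < T) pay (M t) (upd (b t) i j) i.

Lemma sum_utility_gain (s : strategy R K) : is_strategy s ->
  \sum_(t < T) utility P (M t) i (b t) s =
  \int[P]_(v in itv01 R) gain total_alloc total_pay (s v) v.
Proof.
move=> s_meas.
pose gain_t t := gain (fun j => alloc (M t) (upd (b t) i j) i)
                      (fun j => pay (M t) (upd (b t) i j) i).
rewrite -(@Rintegral_sum _ _ _ P _ _ _ (fun t v => gain_t t (s v) v)).
- by apply: eq_Rintegral => v _; rewrite /gain_t /gain sumrB mulr_suml.
- exact: measurable_itv.
- by move=> t; exact: integrable_gain_strategy.
Qed.

End repeated_auction.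

Theorem mainTheorem3 (R : realType) (n K T : nat) (hK : (0 < K)%N)
  (P : probability R R) (hP : continuous_dist01 P)
  (i : 'I_n) (M : 'I_T -> auction R n K) (b : 'I_T -> profile n K)
  (hMv : forall t, valid_auction (M t)) (hMm : forall t, alloc_monotone (M t)) :
  (exists m : R,
     is_max (@is_strategy R K)
       (fun s => \sum_(t < T) utility P (M t) i (b t) s) m /\
     is_max (@is_monotone_strategy R K)
       (fun s => \sum_(t < T) utility P (M t) i (b t) s) m) /\
  (forall st : 'I_T -> strategy R K, (forall t, is_strategy (st t)) ->
     exists r : R,
       is_max (@is_strategy R K)
         (fun s => \sum_(t < T) (utility P (M t) i (b t) s
                                 - utility P (M t) i (b t) (st t))) r /\
       is_max (@is_monotone_strategy R K)
         (fun s => \sum_(t < T) (utility P (M t) i (b t) s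
                                 - utility P (M t) i (b t) (st t))) r).
Proof.
pose U s := \sum_(t < T) utility P (M t) i (b t) s.
have alloc_mono (j j' : 'I_K.+1) :
    (j <= j')%N -> total_alloc i M b j <= total_alloc i M b j'.
  by move=> le_jj'; apply: ler_sum => t _; exact: hMm.
have top_mono := top_best_bid_monotone_strategy (total_pay i M b) alloc_mono.
set top := top_best_bid _ _ in top_mono.
have top_best s : is_strategy s -> U s <= U top.
  move=> s_meas; rewrite /U !sum_utility_gain //; last by case: top_mono.
  exact: Rintegral_gain_le_top_best_bid.
have max_all : is_max (@is_strategy R K) U (U top).
  by apply: is_max_attained top_best; case: top_mono.
have max_mono : is_max (@is_monotone_strategy R K) U (U top).
  by apply: is_max_attained top_mono _ => s [s_meas _]; exact: top_best.
split; first by exists (U top).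
move=> st _; exists (U top - \sum_(t < T) utility P (M t) i (b t) (st t)).
have -> : (fun s => \sum_(t < T) (utility P (M t) i (b t) s
                                 - utility P (M t) i (b t) (st t))) =
          (fun s => U s - \sum_(t < T) utility P (M t) i (b t) (st t)).
  by apply/funext => s; rewrite sumrB.
by split; exact: is_max_subr.
Qed.
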